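(* Let $c$ be a positive integer and let $\nu$ be the smallest positive integer that does not divide $c$. There exists $N(c)$ such that for every integer $n>N(c)$, $\mathrm{mup}(n+\nu,c)=\mathrm{mup}(n,c)+1$.
   Context: A unique partition of positive integers $A$ and $B$ consists of positive integers $A_1,\dots,A_a$ with $\sum_i A_i=A$ and $B_1,\dots,B_b$ with $\sum_j B_j=B$ such that, viewing these as $a+b$ indexed items, the only subsets of the items whose sum equals $A$ are the set of items $\{A_1,\dots,A_a\}$ and, in case $A=B$, also its complement. $\mathrm{mup}(A,B)$ is the maximum of $a+b$ over all unique partitions of $A$ and $B$ (with $\mathrm{mup}(1,1)=2$). *)

From Stdlib Require Import ClassicalEpsilon.
From mathcomp Require Import all_boot.
Set Implicit Arguments. Unset Strict Implicit. Unset Printing Implicit Defensive.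

(* Items: the a+b items are the entries of sA ++ sB, indexed by 'I_(size sA + size sB);
   indices < size sA are the A-items, the others the B-items. *)
Definition unique_partition (A B : nat) (sA sB : seq nat) : Prop :=
  [/\ all (fun x => 0 < x) sA, all (fun x => 0 < x) sB,
      sumn sA = A, sumn sB = B &
      forall S : {set 'I_(size sA + size sB)},
        \sum_(i in S) nth 0 (sA ++ sB) i = A ->
        S = [set i : 'I_(size sA + size sB) | i < size sA]
        \/ (A = B /\ S = [set i : 'I_(size sA + size sB) | size sA <= i])].

Definition asb (P : Prop) : bool :=
  if excluded_middle_informative P then true else false.

Definition has_up_of_size (A B k : nat) : Prop :=
  exists sA sB, unique_partition A B sA sB /\ size sA + size sB = k.

(* mup A B = max of a+b over unique partitions; since all parts are positive,
   a + b <= A + B, so the maximum may be taken over k <= A + B. *)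
Definition mup (A B : nat) : nat :=
  \max_(k < (A + B).+1 | asb (has_up_of_size A B k)) k.

(* For c < n, a partition of n and c is unique exactly when no positive integer is a
   subset sum of both sides.  The side of n then has fewer than c / p parts equal to
   each divisor p < nu of c, so if it also has at most c parts equal to nu, its size is
   roughly at most n / (nu + 1).  But n - c = q nu + r admits the unique partition
   (r + c, nu, ..., nu | c) with about n / nu parts, so for n large every optimal
   partition of n has more than c parts equal to nu.  Adding one more such part then
   creates no new subset sum up to c, and removing one from an optimal partition of
   n + nu keeps it unique; hence mup (n + nu) c = mup n c + 1. *)
From Stdlib Require Import ClassicalEpsilon.
From mathcomp Require Import all_boot zify.

Set Implicit Arguments.
Unset Strict Implicit.
Unset Printing Implicit Defensive.

Fixpoint subsum (s : seq nat) (x : nat) : bool :=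
  if s is v :: s' then subsum s' x || (v <= x) && subsum s' (x - v) else x == 0.

Lemma big_set_ord_recl n (X : {set 'I_n.+1}) (F : 'I_n.+1 -> nat) :
  \sum_(i in X) F i =
    (ord0 \in X) * F ord0 + \sum_(j in [set j : 'I_n | lift ord0 j \in X]) F (lift ord0 j).
Proof.
rewrite big_mkcond big_ord_recl [in RHS]big_mkcond; congr (_ + _).
  by case: (ord0 \in X); rewrite ?mul1n ?mul0n.
by apply: eq_bigr => i _; rewrite inE.
Qed.

Lemma subsumP s x :
  reflect (exists X : {set 'I_(size s)}, \sum_(i in X) nth 0 s i = x) (subsum s x).
Proof.
elim: s x => [|v s IH] x /=.
  apply: (iffP eqP) => [->|[X <-]]; first by exists set0; rewrite big_set0.
  by rewrite big_mkcond big_ord0.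
pose extend b (X : {set 'I_(size s)}) : {set 'I_(size s).+1} :=
  [set i | if unlift ord0 i is Some j then j \in X else b].
have extendE b X : (ord0 \in extend b X) = b /\ [set j | lift ord0 j \in extend b X] = X.
  by split; [rewrite inE unlift_none | apply/setP => j; rewrite !inE liftK].
apply: (iffP orP) => [[/IH [X <-] | /andP [le_vx /IH [X sumX]]] | [X]].
- exists (extend false X); rewrite big_set_ord_recl; have [-> ->] := extendE false X.
  by rewrite mul0n.
- exists (extend true X); rewrite big_set_ord_recl; have [-> ->] := extendE true X.
  by rewrite mul1n /= sumX subnKC.
rewrite big_set_ord_recl /= => <-.
set Y := [set j | _].
have subsumY : subsum s (\sum_(j in Y) nth 0 s j) by apply/IH; exists Y.
by case: (ord0 \in X); [right; rewrite mul1n leq_addr addKn | left; rewrite mul0n].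
Qed.

Lemma subsum0 s : subsum s 0.
Proof. by elim: s => //= v s ->. Qed.

Lemma subsum_sumn s : subsum s (sumn s).
Proof. by elim: s => //= v s IH; rewrite leq_addr addKn IH orbT. Qed.

Lemma subsum_leq_sumn s x : subsum s x -> x <= sumn s.
Proof.
elim: s x => [|v s IH] x /=; first by move/eqP->.
by case/orP => [/IH | /andP [le_vx /IH]]; lia.
Qed.

Lemma subsum_rem v s x : subsum (rem v s) x -> subsum s x.
Proof.
elim: s x => [|w s IH] x //=.
have [-> /= -> // | _ /=] := eqVneq w v.
by case/orP => [/IH -> // | /andP [le_wx /IH ->]]; rewrite le_wx orbT.
Qed.

Lemma subsum_nseq q v x : subsum (nseq q v) x -> v %| x.
Proof.
elim: q x => [|q IH] x /=; first by move/eqP->.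
case/orP => [/IH // | /andP [le_vx /IH dvd_v]].
by rewrite -(subnK le_vx) dvdn_add.
Qed.

(* A subset sum below [count_mem v s * v] misses a copy of [v], which can be added. *)
Lemma subsumD_count v s y : subsum s y -> y < count_mem v s * v -> subsum s (y + v).
Proof.
elim: s y => [|w s IH] y //=.
have [-> | _] := eqVneq w v; case/orP => [sub_y | /andP [le_y sub_y]].
- by rewrite leq_addl addnK sub_y orbT.
- rewrite add1n mulSn => lt_y.
  have lt_yv : y - v < count_mem v s * v by rewrite ltn_subLR.
  by have := IH _ sub_y lt_yv; rewrite subnK // leq_addl addnK => ->; rewrite orbT.
- by move=> /(IH _ sub_y) ->.
- move=> lt_y.
  have lt_yw : y - w < count_mem v s * v by apply: leq_ltn_trans (leq_subr w y) lt_y.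
  have := IH _ sub_y lt_yw; rewrite addnBAC // => ->.
  by rewrite (leq_trans le_y (leq_addr _ _)) orbT.
Qed.

Lemma subsum_mul_count v s k : k <= count_mem v s -> subsum s (k * v).
Proof.
have [-> | v_gt0] := posnP v; first by rewrite muln0 subsum0.
elim: k => [|k IH] le_k; first by rewrite mul0n subsum0.
by rewrite mulSn addnC subsumD_count ?IH ?ltn_mul2r ?v_gt0 // ltnW.
Qed.

Lemma sumn_nth s : sumn s = \sum_(i < size s) nth 0 s i.
Proof. by rewrite sumnE (big_nth 0) big_mkord. Qed.

Lemma sum_nth_setC s (X : {set 'I_(size s)}) :
  \sum_(i in ~: X) nth 0 s i = sumn s - \sum_(i in X) nth 0 s i.
Proof.
rewrite sumn_nth (bigID (mem X) predT) /= addKn.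
by apply: eq_bigl => i; rewrite inE.
Qed.

Lemma sum_nth_eq0 s (X : {set 'I_(size s)}) :
  all (fun x => 0 < x) s -> \sum_(i in X) nth 0 s i = 0 -> X = set0.
Proof.
move=> /allP s_gt0 /eqP; rewrite sum_nat_eq0 => /forallP X0.
apply/setP => i; rewrite inE; apply/negP => Xi.
by have := s_gt0 _ (mem_nth 0 (ltn_ord i)); have /implyP/(_ Xi)/eqP-> := X0 i.
Qed.

Lemma sum_nth_cat (sA sB : seq nat) (S : {set 'I_(size sA + size sB)}) :
  \sum_(i in S) nth 0 (sA ++ sB) i =
    \sum_(i in [set j | lshift (size sB) j \in S]) nth 0 sA i +
    \sum_(i in [set j | rshift (size sA) j \in S]) nth 0 sB i.
Proof.
rewrite big_split_ord; congr (_ + _); apply: eq_big => i; rewrite ?inE // => _.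
  by rewrite nth_cat /= ltn_ord.
by rewrite nth_cat /= ltnNge leq_addr /= addKn.
Qed.

Definition subsum_disjoint (A B : nat) (sA sB : seq nat) : Prop :=
  [/\ all (fun x => 0 < x) sA, all (fun x => 0 < x) sB, sumn sA = A, sumn sB = B &
      forall x, 0 < x -> subsum sA x -> subsum sB x -> False].

(* A common subset sum [x = sum X = sum Y] lets [Y] replace [X] among the items of [A]. *)
Lemma unique_partition_subsum_disjoint A B sA sB :
  A != B -> unique_partition A B sA sB -> subsum_disjoint A B sA sB.
Proof.
move=> neq_AB [sA_gt0 sB_gt0 sumA sumB uniq_S]; split=> // x x_gt0 subA subB.
have le_xA : x <= A by rewrite -sumA subsum_leq_sumn.
move: subA subB => /subsumP [X sumX] /subsumP [Y sumY].
pose S := [set i : 'I_(size sA + size sB) |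
  match split i with inl k => k \notin X | inr k => k \in Y end].
have sumS : \sum_(i in S) nth 0 (sA ++ sB) i = A.
  rewrite sum_nth_cat.
  have -> : [set j | lshift (size sB) j \in S] = ~: X.
    by apply/setP => j; rewrite !inE (unsplitK (inl _ j)).
  have -> : [set j | rshift (size sA) j \in S] = Y.
    by apply/setP => j; rewrite !inE (unsplitK (inr _ j)).
  by rewrite sum_nth_setC sumX sumY sumA subnK.
have [j Yj] : exists j, j \in Y.
  by apply/set0Pn/negP => /eqP Y0; move: sumY x_gt0; rewrite Y0 big_set0 => <-.
have : rshift (size sA) j \in S by rewrite inE (unsplitK (inr _ j)).
have [-> | [eq_AB _]] := uniq_S S sumS; last by rewrite eq_AB eqxx in neq_AB.
by rewrite inE /= ltnNge leq_addr.
Qed.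

(* If [S] sums to [A], the items of [A] outside [S] and those of [B] inside [S] have
   equal sums, which must therefore vanish. *)
Lemma subsum_disjoint_unique_partition A B sA sB :
  subsum_disjoint A B sA sB -> unique_partition A B sA sB.
Proof.
move=> [sA_gt0 sB_gt0 sumA sumB disj]; split=> // S; rewrite sum_nth_cat.
set XA := [set j | _ \in S]; set YB := [set j | _ \in S] => sumS; left.
have sumYB : \sum_(i in ~: XA) nth 0 sA i = \sum_(i in YB) nth 0 sB i.
  by rewrite sum_nth_setC sumA -sumS addKn.
have [YB0 | YB_gt0] := posnP (\sum_(i in YB) nth 0 sB i); last first.
  by case: (disj _ YB_gt0); apply/subsumP; [exists (~: XA) | exists YB].
have /setP YB_empty := sum_nth_eq0 sB_gt0 YB0.
have /setP XA_full : ~: XA = set0 by apply: sum_nth_eq0; rewrite // sumYB.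
apply/setP => i; rewrite inE; have [lt_iA | le_Ai] := ltnP i (size sA).
  have -> : i = lshift (size sB) (Ordinal lt_iA) by apply: val_inj.
  by have := XA_full (Ordinal lt_iA); rewrite !inE => /negbFE.
have lt_iB : i - size sA < size sB by rewrite ltn_subLR ?ltn_ord.
have -> : i = rshift (size sA) (Ordinal lt_iB) by apply: val_inj; rewrite /= subnKC.
by have := YB_empty (Ordinal lt_iB); rewrite !inE.
Qed.

Lemma asbP (P : Prop) : reflect P (asb P).
Proof. by rewrite /asb; case: excluded_middle_informative => p; constructor. Qed.

Lemma size_leq_sumn s : all (fun x => 0 < x) s -> size s <= sumn s.
Proof. by elim: s => [|x s IH] //= /andP [x_gt0 /IH]; lia. Qed.

Lemma has_up_of_size_leq_add A B k : has_up_of_size A B k -> k <= A + B.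
Proof.
by case=> sA [sB [[sA_gt0 sB_gt0 <- <- _] <-]]; rewrite leq_add ?size_leq_sumn.
Qed.

Lemma leq_mup A B k : has_up_of_size A B k -> k <= mup A B.
Proof.
move=> up_k; have lt_k : k < (A + B).+1 := has_up_of_size_leq_add up_k.
by apply: (@leq_bigmax_cond _ _ (fun i => val i) (Ordinal lt_k)); apply/asbP.
Qed.

Lemma has_up_of_size_mup A B k : has_up_of_size A B k -> has_up_of_size A B (mup A B).
Proof.
move=> up_k; have lt_k : k < (A + B).+1 := has_up_of_size_leq_add up_k.
have up_ord : asb (has_up_of_size A B (Ordinal lt_k)) by apply/asbP.
by rewrite /mup (bigmax_eq_arg _ up_ord); case: arg_maxnP => // i /asbP.
Qed.

Lemma subsum_disjoint_leq_mup A B sA sB :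
  subsum_disjoint A B sA sB -> size sA + size sB <= mup A B.
Proof.
by move=> /subsum_disjoint_unique_partition up; apply: leq_mup; exists sA, sB.
Qed.

Lemma mup_subsum_disjoint A B k : A != B -> has_up_of_size A B k ->
  exists sA sB, subsum_disjoint A B sA sB /\ size sA + size sB = mup A B.
Proof.
move=> neq_AB /has_up_of_size_mup [sA [sB [up size_up]]].
by exists sA, sB; split; first exact: unique_partition_subsum_disjoint.
Qed.

(* Every subset sum of [v :: sA] not exceeding [B] is already one of [sA]: if it uses the
   new copy of [v], one of the [count_mem v sA] old copies is still free. *)
Lemma subsum_disjoint_cons A B v sA sB : 0 < v -> B <= count_mem v sA * v ->
  subsum_disjoint A B sA sB -> subsum_disjoint (A + v) B (v :: sA) sB.
Proof.
move=> v_gt0 le_B [sA_gt0 sB_gt0 sumA sumB disj].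
split=> //=; rewrite ?v_gt0 ?sumA 1?addnC //.
move=> x x_gt0 /orP [subA | /andP [le_vx subA]] subB.
  exact: disj x_gt0 subA subB.
have le_xB : x <= B by rewrite -sumB subsum_leq_sumn.
have lt_x : x - v < count_mem v sA * v by lia.
by apply: (disj x x_gt0 _ subB); have := subsumD_count subA lt_x; rewrite subnK.
Qed.

Lemma subsum_disjoint_rem A B v sA sB : v \in sA ->
  subsum_disjoint (A + v) B sA sB -> subsum_disjoint A B (rem v sA) sB.
Proof.
move=> v_in [sA_gt0 sB_gt0 sumA sumB disj]; split=> //.
- by apply/allP => x /mem_rem; apply/allP.
- by apply/eqP; rewrite -(eqn_add2r v) -sumA (perm_sumn (perm_to_rem v_in)) /= addnC.
by move=> x x_gt0 /subsum_rem; apply: disj.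
Qed.

Lemma count_mem_lt_divn A B sA sB p : subsum_disjoint A B sA sB -> 0 < B -> p %| B ->
  count_mem p sA < B %/ p.
Proof.
move=> [_ _ _ sumB disj] B_gt0 dvd_pB; rewrite ltnNge; apply/negP => le_B.
apply: (disj B B_gt0); last by rewrite -sumB subsum_sumn.
by rewrite -(divnK dvd_pB) subsum_mul_count.
Qed.

Lemma count_leqS m s :
  count (fun x => x <= m.+1) s = count (fun x => x <= m) s + count_mem m.+1 s.
Proof. by elim: s => [|x s IH] //=; rewrite IH; case: (ltngtP x m.+1) => /=; lia. Qed.

Lemma count_leq_mul m b s : (forall p, p <= m -> count_mem p s <= b) ->
  count (fun x => x <= m) s <= m.+1 * b.
Proof.
elim: m => [|m IH] count_le.
  by rewrite (eq_count (a2 := pred1 0)) ?mul1n ?count_le // => x; rewrite /= leqn0.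
rewrite count_leqS mulSn addnC leq_add ?count_le ?IH // => p le_pm.
by rewrite count_le ?(leq_trans le_pm).
Qed.

Lemma count_gt_mul m s : m.+1 * count (fun x => m < x) s <= sumn s.
Proof. by elim: s => [|x s IH] /=; [rewrite muln0 | case: (ltnP m x) => /=; lia]. Qed.

(* Few parts are small, and the large ones are at most [sumn s / m.+1] in number. *)
Lemma size_leq_few_small m b s : (forall p, p <= m -> count_mem p s <= b) ->
  m.+1 * size s <= m.+1 * (m.+1 * b) + sumn s.
Proof.
move=> /count_leq_mul count_small.
rewrite -(count_predC (fun x => x <= m) s) mulnDr leq_add ?leq_mul2l ?count_small //.
by rewrite (eq_count (a2 := fun x => m < x)) ?count_gt_mul // => x; rewrite /= ltnNge.
Qed.

Section AddingNu.

Variables c nu : nat.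
Hypotheses (c_gt0 : 0 < c) (nu_gt0 : 0 < nu) (nu_ndvd_c : ~~ (nu %| c))
  (dvd_c_lt_nu : forall k, 0 < k < nu -> k %| c).

(* Witness: (n - q nu, nu, ..., nu | c) with q = (n - c - 1) %/ nu, whose first part
   exceeds c. *)
Lemma has_up_of_size_nseq_nu n : c < n -> has_up_of_size n c ((n - c - 1) %/ nu + 2).
Proof.
move=> lt_cn; set q := (n - c - 1) %/ nu.
have le_qnu : q * nu <= n - c - 1 by exact: leq_divM.
exists (n - q * nu :: nseq q nu), [:: c]; split; last by rewrite /= size_nseq; lia.
apply: subsum_disjoint_unique_partition; split.
- by rewrite /= all_nseq nu_gt0 orbT andbT; lia.
- by rewrite /= c_gt0.
- by rewrite /= sumn_nseq mulnC; lia.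
- by rewrite /= addn0.
move=> x x_gt0 subA /= /orP [/eqP x0 | /andP [le_cx /eqP x_c]]; first by lia.
move: subA; have -> : x = c by lia.
case/orP => [/subsum_nseq dvd_nu_c | /andP [le_c _]]; last by lia.
by move: nu_ndvd_c; rewrite dvd_nu_c.
Qed.

Lemma size_leq_few_nu n sA sB : subsum_disjoint n c sA sB -> count_mem nu sA <= c ->
  nu.+1 * (size sA + size sB) <= nu.+1 * (nu.+1 * c + c) + n.
Proof.
move=> disj few_nu; have [sA_gt0 sB_gt0 sumA sumB _] := disj.
have count_le p : p <= nu -> count_mem p sA <= c.
  have [-> _ | p_gt0] := posnP p.
    by rewrite (count_memPn _) //; apply/negP => /(allP sA_gt0).
  rewrite leq_eqVlt => /predU1P [-> // | lt_p_nu].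
  apply: ltnW; apply: leq_trans (count_mem_lt_divn disj c_gt0 _) (leq_div _ _).
  by apply: dvd_c_lt_nu; rewrite p_gt0.
have := size_leq_few_small count_le; rewrite sumA !mulnDr => le_A.
have : size sB <= c by rewrite -sumB size_leq_sumn.
by rewrite -(leq_pmul2l (ltn0Sn nu)) => le_B; rewrite addnAC leq_add.
Qed.

(* Against the [(m - c - 1) %/ nu + 2] parts of [has_up_of_size_nseq_nu], the bound of
   [size_leq_few_nu] fails once [m > nu * D + nu.+1 * c + c]. *)
Lemma optimal_partition_many_nu : exists N, forall m, N < m ->
  exists sA sB,
    [/\ subsum_disjoint m c sA sB, size sA + size sB = mup m c & c < count_mem nu sA].
Proof.
pose D := nu.+1 * (nu.+1 * c + c).
exists (nu * D + nu.+1 * c + c) => m lt_m.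
have lt_cm : c < m by lia.
have up_nu := has_up_of_size_nseq_nu lt_cm.
have [sA [sB [disj size_opt]]] := mup_subsum_disjoint (negbT (gtn_eqF lt_cm)) up_nu.
exists sA, sB; split=> //; rewrite ltnNge; apply/negP => few_nu.
have := size_leq_few_nu disj few_nu; rewrite size_opt => le_mup.
have := leq_mup up_nu; set S := mup m c in le_mup *; set q := (m - c - 1) %/ nu => le_qS.
have lt_q : m - c - 1 < q.+1 * nu by exact: ltn_ceil.
have le_mcS : m - c <= nu * S.
  by rewrite mulnC; apply: leq_trans (leq_mul (_ : q.+1 <= S) (leqnn nu)); lia.
have : nu.+1 * (m - c) <= nu * (D + m).
  by apply: leq_trans (leq_mul (leqnn nu.+1) le_mcS) _; rewrite mulnCA leq_mul2l le_mup orbT.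
by move: lt_m; rewrite mulnBr mulnDr !mulSn; lia.
Qed.

End AddingNu.

Theorem proposition3p3 (c nu : nat) :
  0 < c ->
  0 < nu -> ~~ (nu %| c) -> (forall k, 0 < k < nu -> k %| c) ->
  exists N : nat, forall n : nat, N < n -> mup (n + nu) c = mup n c + 1.
Proof.
move=> c_gt0 nu_gt0 nu_ndvd_c dvd_c_lt_nu.
have [N many_nu] := optimal_partition_many_nu c_gt0 nu_gt0 nu_ndvd_c dvd_c_lt_nu.
exists N => n lt_Nn; apply/eqP; rewrite eqn_leq; apply/andP; split.
- have [sA [sB [disj size_opt many]]] := many_nu (n + nu) (ltn_addr _ lt_Nn).
  have nu_in : nu \in sA by rewrite -has_pred1 has_count; lia.
  have := subsum_disjoint_leq_mup (subsum_disjoint_rem nu_in disj).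
  have size_gt0 : 0 < size sA by case: (sA) nu_in.
  by rewrite size_rem // -size_opt -(prednK size_gt0) addSn addn1 ltnS.
- have [sA [sB [disj size_opt many]]] := many_nu n lt_Nn.
  rewrite -size_opt addn1 -addSn.
  apply: (subsum_disjoint_leq_mup (subsum_disjoint_cons nu_gt0 _ disj)).
  by rewrite (leq_trans (ltnW many)) // leq_pmulr.
Qed.
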